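(* Let $\langle\vec l,\vec c\rangle$ be a ladder system coloring and $E\subseteq\omega_1$ a stationary and co-stationary set. Then $\mathbb{P}_E(\vec l,\vec c)$ is $\mathsf{stat}_{\omega_1\setminus E}$-pc.
   Context: A ladder system is $\vec l=\langle l_\alpha:\alpha\in\omega_1\cap\mathrm{Lim}\rangle$ with each $l_\alpha\subseteq\alpha$ cofinal in $\alpha$ of order type $\omega$; $l_{\alpha,n}$ is the $n$-th element of $l_\alpha$ and $l_\alpha^n=\{l_{\alpha,m}:m\ge n\}$. A ladder system coloring is $\langle\vec l,\vec c\rangle$ with $\vec c=\langle c_\alpha:l_\alpha\to\omega\rangle$. $\mathbb{P}_E(\vec l,\vec c)$ is the set of finite partial functions $p$ from $E\cap\mathrm{Lim}$ to $\omega$ such that $\bigcup_{\alpha\in\mathrm{dom}(p)}c_\alpha\restriction l_\alpha^{p(\alpha)}$ is a function, ordered by $q\le p$ iff $q\supseteq p$. For $X\subseteq\omega_1$, $\mathsf{stat}_X$ is the family of stationary subsets of $\omega_1$ contained in $X$; a poset is $\mathsf{stat}_X$-pc if for every $S\in\mathsf{stat}_X$ and every $\langle p_\alpha:\alpha\in S\rangle$ there is $S'\in\mathsf{stat}_S$ with $\{p_\alpha:\alpha\in S'\}$ centered (every finite subset has a common lower bound). *)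

From Stdlib Require Import List.



(** omega_1, characterized up to isomorphism: a strict well-order that is
    total, uncountable, and all of whose proper initial segments are countable. *)
Record Omega1 : Type := {
  o1 :> Type;
  olt : o1 -> o1 -> Prop;
  olt_irrefl : forall x, ~ olt x x;
  olt_trans : forall x y z, olt x y -> olt y z -> olt x z;
  olt_total : forall x y, olt x y \/ x = y \/ olt y x;
  olt_wf : well_founded olt;
  o1_uncountable : ~ exists f : o1 -> nat, forall x y, f x = f y -> x = y;
  o1_segments_countable : forall a : o1,
    exists f : {y : o1 | olt y a} -> nat, forall x y, f x = f y -> x = y
}.

Section Defs.
Variable W : Omega1.
Notation "x < y" := (olt W x y).

Definition is_limit (a : W) : Prop :=
  (exists b, b < a) /\ forall b, b < a -> exists c, b < c /\ c < a.

Definition unbounded (C : W -> Prop) : Prop :=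
  forall a, exists b, a < b /\ C b.

Definition closed (C : W -> Prop) : Prop :=
  forall a, is_limit a ->
    (forall b, b < a -> exists c, b < c /\ c < a /\ C c) -> C a.

Definition club (C : W -> Prop) : Prop := closed C /\ unbounded C.

Definition stationary (S : W -> Prop) : Prop :=
  forall C, club C -> exists a, C a /\ S a.

Definition stat (X : W -> Prop) (S : W -> Prop) : Prop :=
  stationary S /\ forall a, S a -> X a.

(** ladder system: l a n = l_{a,n}, the n-th element of l_a; l_a is a
    subset of a of order type omega cofinal in a, i.e. the range of a
    strictly increasing sequence below a, cofinal in a. *)
Definition ladder_system (l : W -> nat -> W) : Prop :=
  forall a, is_limit a ->
    (forall n, l a n < a) /\
    (forall n m, (n < m)%nat -> l a n < l a m) /\
    (forall b, b < a -> exists n, b < l a n).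

(** A coloring c_a : l_a -> omega is represented by c a n = c_a(l_{a,n}). *)

(** Conditions: finite partial functions W -> nat (None = undefined). *)
Definition cond := W -> option nat.

Definition finite_dom (p : cond) : Prop :=
  exists s : list W, forall a, p a <> None -> In a s.

Definition in_PE (E : W -> Prop) (l : W -> nat -> W) (c : W -> nat -> nat)
    (p : cond) : Prop :=
  finite_dom p /\
  (forall a k, p a = Some k -> E a /\ is_limit a) /\
  (* the union of c_a restricted to l_a^{p(a)} is a function *)
  (forall a b ka kb m n, p a = Some ka -> p b = Some kb ->
     (ka <= m)%nat -> (kb <= n)%nat -> l a m = l b n -> c a m = c b n).

(** q <= p iff q extends p *)
Definition ext (q p : cond) : Prop := forall a k, p a = Some k -> q a = Some k.

Definition centered (E : W -> Prop) (l : W -> nat -> W) (c : W -> nat -> nat)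
    (F : cond -> Prop) : Prop :=
  forall s : list cond, (forall p, In p s -> F p) ->
    exists q, in_PE E l c q /\ forall p, In p s -> ext q p.

Definition stat_pc (X : W -> Prop) (E : W -> Prop) (l : W -> nat -> W)
    (c : W -> nat -> nat) : Prop :=
  forall (S : W -> Prop) (ps : W -> cond),
    stat X S -> (forall a, S a -> in_PE E l c (ps a)) ->
    exists S', stat S S' /\ centered E l c (fun q => exists a, S' a /\ q = ps a).

End Defs.

From Stdlib Require Import List Classical ClassicalEpsilon Arith Lia Cantor.

(* Thin out [S] to a stationary set of limits [a] above the domains of all
   earlier conditions.  For such [a], the condition [ps a] leaves a finite trace
   below [a]: its restriction to [a], and the colors that its ladders from above
   [a] put on points below [a].  By Fodor's lemma the trace is bounded below some
   fixed [b0] on a stationary set, and there are only countably many finite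
   traces below [b0], so it is constant on a stationary [S'].  Two conditions
   with the same trace at [a < b] are compatible: as [b] lies outside [E] it is
   not in the domain of [ps b], so every point where [ps a] and [ps b] could
   clash is recorded in the common trace. *)

Lemma to_nat_inj (p q : nat * nat) : to_nat p = to_nat q -> p = q.
Proof. intro H. rewrite <- (cancel_of_to p), <- (cancel_of_to q), H. reflexivity. Qed.

Lemma finite_pred_list (T : Type) (Q : T -> Prop) (s : list T) :
  (forall z, Q z -> In z s) -> exists L, forall z, In z L <-> Q z.
Proof.
  revert Q. induction s as [|a s IH]; intros Q Hs.
  - exists nil. intro z. split; [intros []|apply Hs].
  - destruct (IH (fun z => Q z /\ z <> a)) as [L HL].
    { intros z [Hz Hne]. destruct (Hs z Hz); [congruence|auto]. }
    destruct (classic (Q a)) as [Qa|Qa].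
    + exists (a :: L). intro z. simpl. rewrite HL. split.
      * intros [<-|[? ?]]; auto.
      * intro Hz. destruct (classic (a = z)); auto.
    + exists L. intro z. rewrite HL. split; [tauto|].
      intro Hz. split; auto. intros ->. auto.
Qed.

Fixpoint code_list (L : list (nat * nat)) : nat :=
  match L with nil => 0 | x :: L' => S (to_nat (to_nat x, code_list L')) end.

Lemma code_list_inj (L M : list (nat * nat)) : code_list L = code_list M -> L = M.
Proof.
  revert M. induction L as [|x L IH]; intros [|y M]; cbn [code_list];
    try discriminate; auto.
  intro H. apply eq_add_S, to_nat_inj in H. injection H; intros HLM Hxy.
  apply to_nat_inj in Hxy. rewrite Hxy, (IH M HLM). reflexivity.
Qed.

Lemma map_inj_on (A B : Type) (f : A -> B) (P : A -> Prop) :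
  (forall x y, P x -> P y -> f x = f y -> x = y) ->
  forall L M, (forall x, In x L -> P x) -> (forall x, In x M -> P x) ->
  map f L = map f M -> L = M.
Proof.
  intros Hf. induction L as [|x L IH]; intros [|y M] HL HM; simpl; try discriminate; auto.
  intro H. injection H; intros HLM Hxy.
  rewrite (Hf x y), (IH M); simpl in *; auto.
Qed.

Local Notation "x <w y" := (olt _ x y) (at level 70).

Section ClubFilter.

Variable W : Omega1.

Lemma olt_asym (x y : W) : x <w y -> ~ y <w x.
Proof. intros Hxy Hyx. exact (olt_irrefl W x (olt_trans W _ _ _ Hxy Hyx)). Qed.

Lemma olt_least (P : W -> Prop) :
  (exists x, P x) -> exists m, P m /\ forall y, y <w m -> ~ P y.
Proof.
  intros [x Hx]. apply NNPP; intro Hno.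
  assert (Hnot : forall z, ~ P z).
  { intro z. induction z as [z IH] using (well_founded_ind (olt_wf W)).
    intro Pz. apply Hno. exists z. split; auto. }
  exact (Hnot x Hx).
Qed.

Lemma closed_segment_code (a : W) :
  exists f : W -> nat, forall x y, ~ a <w x -> ~ a <w y -> f x = f y -> x = y.
Proof.
  destruct (o1_segments_countable W a) as [f Hf].
  exists (fun x => match excluded_middle_informative (x <w a) with
           | left p => S (f (exist _ x p)) | right _ => 0 end).
  intros x y Hx Hy.
  destruct (excluded_middle_informative (x <w a)) as [px|px],
    (excluded_middle_informative (y <w a)) as [py|py]; intro Hxy; try discriminate.
  - injection Hxy; intro H. apply Hf in H. injection H; auto.
  - destruct (olt_total W x a) as [|[->|]], (olt_total W y a) as [|[->|]]; tauto.
Qed.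

(* Otherwise every [s] lies below some [h i], and coding [s] by [i] and its
   position in the closed segment below [h i] would make [W] countable. *)
Lemma countable_family_bounded (I : Type) (e : I -> nat) (h : I -> W) :
  (forall i j, e i = e j -> i = j) -> exists s, forall i, h i <w s.
Proof.
  intros Heinj. apply NNPP; intro Hno.
  assert (Hcover : forall s, exists i, ~ h i <w s).
  { intro s. apply NNPP; intro H. apply Hno. exists s. intro i.
    apply NNPP; intro Hi. apply H. eauto. }
  destruct (choice _ Hcover) as [idx Hidx].
  destruct (choice _ (fun i => closed_segment_code (h i))) as [F HF].
  apply (o1_uncountable W). exists (fun s => to_nat (e (idx s), F (idx s) s)).
  intros x y Hxy. apply to_nat_inj in Hxy. injection Hxy; intros Hf Hi.
  apply Heinj in Hi. rewrite Hi in Hf.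
  apply (HF (idx y)); auto. rewrite <- Hi. apply Hidx.
Qed.

Lemma exists_olt_gt (a : W) : exists b, a <w b.
Proof.
  destruct (countable_family_bounded unit (fun _ => 0) (fun _ => a)) as [s Hs].
  - intros [] [] _. reflexivity.
  - exists s. exact (Hs tt).
Qed.

Lemma list_strict_bound (x0 : W) (L : list W) :
  exists b, x0 <w b /\ forall y, In y L -> y <w b.
Proof.
  destruct (countable_family_bounded (option nat)
      (fun o => match o with None => 0 | Some n => S n end)
      (fun o => match o with None => x0 | Some n => nth n L x0 end)) as [b Hb].
  - intros [i|] [j|]; simpl; intro H; congruence.
  - exists b. split; [exact (Hb None)|].
    intros y Hy. destruct (In_nth L y x0 Hy) as [n [_ <-]]. exact (Hb (Some n)).
Qed.

Lemma limit_list_bound (a : W) (L : list W) :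
  is_limit W a -> (forall y, In y L -> y <w a) ->
  exists b, b <w a /\ forall y, In y L -> y <w b.
Proof.
  intros Ha. induction L as [|y L IH]; intros HL.
  - destruct (proj1 Ha) as [b Hb]. exists b. simpl; tauto.
  - destruct IH as [b [Hba Hb]]. { intros; apply HL; simpl; auto. }
    destruct (proj2 Ha y (HL y (or_introl eq_refl))) as [d [Hyd Hda]].
    destruct (olt_total W b d) as [Hbd|[<-|Hdb]].
    + exists d. split; auto. intros z [<-|Hz]; eauto using olt_trans.
    + exists b. split; auto. intros z [<-|Hz]; auto.
    + exists b. split; auto. intros z [<-|Hz]; eauto using olt_trans.
Qed.

Lemma increasing_seq_lt (f : nat -> W) :
  (forall n, f n <w f (S n)) -> forall n m, n < m -> f n <w f m.
Proof.
  intros Hf n m Hnm. induction Hnm.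
  - apply Hf.
  - eapply olt_trans; eauto.
Qed.

Lemma sup_of_increasing (f : nat -> W) :
  (forall n, f n <w f (S n)) ->
  exists s, (forall n, f n <w s) /\ (forall y, y <w s -> exists n, y <w f n).
Proof.
  intros Hf.
  destruct (countable_family_bounded nat (fun n => n) f) as [s0 Hs0]; auto.
  destruct (olt_least (fun s => forall n, f n <w s)) as [s [Hs Hmin]]; [eauto|].
  exists s. split; auto.
  intros y Hy. apply NNPP; intro Hno.
  apply (Hmin y Hy). intro n.
  destruct (olt_total W (f n) y) as [?|[Heq|Hlt]]; auto; exfalso; apply Hno.
  - exists (S n). rewrite <- Heq. auto.
  - exists n. auto.
Qed.

Lemma omega_sup (R : W -> W -> Prop) (a0 : W) :
  (forall a, exists a', a <w a' /\ R a a') ->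
  exists (f : nat -> W) s, f 0 = a0 /\
    (forall n, f n <w f (S n) /\ R (f n) (f (S n))) /\
    (forall n, f n <w s) /\ (forall y, y <w s -> exists n, y <w f n) /\
    is_limit W s.
Proof.
  intros Hstep. destruct (choice _ Hstep) as [g Hg].
  pose (f := fun n => Nat.iter n g a0).
  assert (Hf : forall n, f n <w f (S n) /\ R (f n) (f (S n))) by (intro; apply Hg).
  destruct (sup_of_increasing f) as [s [Hub Hsup]]; [intro; apply Hf|].
  exists f, s. do 4 (split; auto). split.
  - exists (f 0). auto.
  - intros b Hb. destruct (Hsup b Hb) as [n Hn]. exists (f n). auto.
Qed.

Lemma segment_uniform_bound (x : W) (Q : W -> W -> Prop) :
  (forall a b b', Q a b -> b <w b' -> Q a b') ->
  (forall a, a <w x -> exists b, Q a b) ->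
  exists s, x <w s /\ forall a, a <w x -> Q a s.
Proof.
  intros Hup Hex.
  destruct (o1_segments_countable W x) as [e He].
  destruct (choice (fun (z : {y | y <w x}) b => Q (proj1_sig z) b)) as [B HB].
  { intros [y Hy]. apply Hex, Hy. }
  destruct (countable_family_bounded (option {y | y <w x})
      (fun o => match o with None => 0 | Some z => S (e z) end)
      (fun o => match o with None => x | Some z => B z end)) as [s Hs].
  { intros [i|] [j|]; simpl; intro H; try discriminate; auto.
    injection H; intro Hij. apply He in Hij. subst; auto. }
  exists s. split; [exact (Hs None)|].
  intros a Ha. apply Hup with (B (exist _ a Ha)).
  - exact (HB (exist _ a Ha)).
  - exact (Hs (Some (exist _ a Ha))).
Qed.

Lemma club_closure_points (Q : W -> W -> Prop) :
  (forall a b b', Q a b -> b <w b' -> Q a b') ->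
  (forall a, exists b, Q a b) ->
  club W (fun b => forall a, a <w b -> Q a b).
Proof.
  intros Hup Hex. split.
  - intros x _ Hcof a Ha. destruct (Hcof a Ha) as [d [Had [Hdx Hd]]]. eauto.
  - intro a.
    destruct (omega_sup (fun x x' => forall y, y <w x -> Q y x') a)
      as [f [s [Hf0 [Hf [Hub [Hsup _]]]]]].
    { intro x. destruct (segment_uniform_bound x Q Hup) as [s [Hxs Hs]].
      { intros; apply Hex. }
      exists s; auto. }
    exists s. split; [rewrite <- Hf0; auto|].
    intros y Hy. destruct (Hsup y Hy) as [n Hn].
    apply Hup with (f (S n)); [apply Hf; auto|auto].
Qed.

Lemma club_limits : club W (is_limit W).
Proof.
  split.
  - intros a Ha _. exact Ha.
  - intro a.
    destruct (omega_sup (fun _ _ => True) a) as [f [s [Hf0 [_ [Hub [_ Hlim]]]]]].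
    { intro x. destruct (exists_olt_gt x) as [b Hb]. eauto. }
    exists s. rewrite <- Hf0. auto.
Qed.

Lemma club_countable_inter (C : nat -> W -> Prop) :
  (forall n, club W (C n)) -> club W (fun x => forall n, C n x).
Proof.
  intros HC. split.
  - intros a Ha Hcof n. apply (proj1 (HC n)); auto.
    intros b Hb. destruct (Hcof b Hb) as [d [? [? ?]]]; eauto.
  - intro a.
    destruct (omega_sup (fun x x' => forall n, exists y, C n y /\ x <w y /\ y <w x') a)
      as [f [s [Hf0 [Hf [Hub [Hsup Hlim]]]]]].
    { intro x.
      destruct (choice _ (fun n => proj2 (HC n) x)) as [Y HY].
      destruct (countable_family_bounded nat (fun n => n) Y) as [s Hs]; auto.
      exists s. split.
      - eapply olt_trans; [apply (HY 0)|apply Hs].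
      - intro n. exists (Y n). split; [apply HY|split; [apply HY|apply Hs]]. }
    exists s. split; [rewrite <- Hf0; auto|].
    intro n. apply (proj1 (HC n)); auto.
    intros b Hb. destruct (Hsup b Hb) as [k Hk].
    destruct (proj2 (Hf k) n) as [y [Hy1 [Hy2 Hy3]]].
    exists y. repeat split; eauto using olt_trans.
Qed.

Lemma club_inter2 (C1 C2 : W -> Prop) :
  club W C1 -> club W C2 -> club W (fun x => C1 x /\ C2 x).
Proof.
  intros H1 H2.
  pose (C := fun n => match n with 0 => C1 | _ => C2 end).
  destruct (club_countable_inter C) as [Hclosed Hunb]; [intros [|n]; auto|].
  split.
  - intros a Ha Hcof.
    assert (HCa : forall n, C n a).
    { apply Hclosed; auto.
      intros b Hb. destruct (Hcof b Hb) as [d [? [? [? ?]]]].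
      exists d. repeat split; auto. intros [|n]; auto. }
    exact (conj (HCa 0) (HCa 1)).
  - intros a. destruct (Hunb a) as [b [? Hb]].
    exists b. split; auto. exact (conj (Hb 0) (Hb 1)).
Qed.

Lemma club_diagonal_inter (C : W -> W -> Prop) :
  (forall b, club W (C b)) -> club W (fun x => forall b, b <w x -> C b x).
Proof.
  intros HC. split.
  - intros a Ha Hcof b Hb. apply (proj1 (HC b)); auto.
    intros y Hy.
    destruct (olt_total W y b) as [Hyb|[<-|Hby]].
    + destruct (Hcof b Hb) as [d [? [? Hd]]]. exists d. repeat split; eauto using olt_trans.
    + destruct (Hcof y Hb) as [d [? [? Hd]]]. exists d. repeat split; auto.
    + destruct (Hcof y Hy) as [d [? [? Hd]]]. exists d. repeat split; eauto using olt_trans.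
  - intro a.
    destruct (omega_sup (fun x x' => forall b, b <w x ->
                 exists y, C b y /\ x <w y /\ y <w x') a)
      as [f [s [Hf0 [Hf [Hub [Hsup Hlim]]]]]].
    { intro x.
      destruct (choice _ (fun b => proj2 (HC b) x)) as [Y HY].
      destruct (segment_uniform_bound x (fun b s => Y b <w s)) as [s [Hxs Hs]].
      { intros; eauto using olt_trans. }
      { intros b _. apply exists_olt_gt. }
      exists s. split; auto.
      intros b Hb. exists (Y b). split; [apply HY|split; [apply HY|auto]]. }
    exists s. split; [rewrite <- Hf0; auto|].
    intros b Hb. apply (proj1 (HC b)); auto.
    destruct (Hsup b Hb) as [k Hk].
    intros y Hy. destruct (Hsup y Hy) as [j Hj].
    pose (m := Nat.max j k).
    assert (Hmono : forall i, i <= m -> forall z, z <w f i -> z <w f m).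
    { intros i Hi z Hz. destruct (Nat.eq_dec i m) as [->|Hne]; auto.
      eapply olt_trans; [exact Hz|]. apply increasing_seq_lt; [intro; apply Hf|lia]. }
    destruct (proj2 (Hf m) b) as [z [Hz1 [Hz2 Hz3]]]; [apply (Hmono k); [lia|auto]|].
    exists z. repeat split; auto.
    + eapply olt_trans; [|exact Hz2]. apply (Hmono j); [lia|auto].
    + eapply olt_trans; [exact Hz3|apply Hub].
Qed.

Lemma stationary_inter_club (S C : W -> Prop) :
  stationary W S -> club W C -> stationary W (fun x => S x /\ C x).
Proof.
  intros HS HC D HD. destruct (HS (fun x => D x /\ C x)) as [a [[? ?] ?]].
  - apply club_inter2; auto.
  - exists a; auto.
Qed.

Lemma stationary_nonempty (S : W -> Prop) : stationary W S -> exists a, S a.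
Proof. intros HS. destruct (HS _ club_limits) as [a [_ Ha]]. eauto. Qed.

Lemma stationary_mono (S T : W -> Prop) :
  (forall a, S a -> T a) -> stationary W S -> stationary W T.
Proof. intros HST HS C HC. destruct (HS C HC) as [a [? ?]]. eauto. Qed.

Lemma pressing_down (S : W -> Prop) (P : W -> W -> Prop) :
  stationary W S -> (forall a, S a -> exists b, b <w a /\ P b a) ->
  exists b, stationary W (fun a => S a /\ P b a).
Proof.
  intros HS HP. apply NNPP; intro Hno.
  assert (Hclub : forall b, exists C, club W C /\ forall a, C a -> ~ (S a /\ P b a)).
  { intro b. apply NNPP; intro H. apply Hno. exists b. intros C HC.
    apply NNPP; intro Hmiss. apply H. exists C. split; auto.
    intros a Ca Ha. apply Hmiss. eauto. }
  destruct (choice _ Hclub) as [C HC].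
  destruct (HS _ (club_diagonal_inter C (fun b => proj1 (HC b)))) as [a [Ha HSa]].
  destruct (HP a HSa) as [b [Hba HPba]].
  exact (proj2 (HC b) a (Ha b Hba) (conj HSa HPba)).
Qed.

Lemma stationary_nat_fiber (S : W -> Prop) (P : nat -> W -> Prop) :
  stationary W S -> (forall a, S a -> exists n, P n a) ->
  exists n, stationary W (fun a => S a /\ P n a).
Proof.
  intros HS HP. apply NNPP; intro Hno.
  assert (Hclub : forall n, exists C, club W C /\ forall a, C a -> ~ (S a /\ P n a)).
  { intro n. apply NNPP; intro H. apply Hno. exists n. intros C HC.
    apply NNPP; intro Hmiss. apply H. exists C. split; auto.
    intros a Ca Ha. apply Hmiss. eauto. }
  destruct (choice _ Hclub) as [C HC].
  destruct (HS _ (club_countable_inter C (fun n => proj1 (HC n)))) as [a [Ha HSa]].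
  destruct (HP a HSa) as [n HPn].
  exact (proj2 (HC n) a (Ha n) (conj HSa HPn)).
Qed.

Lemma bounded_lists_code (b : W) :
  exists e : list (W * nat) -> nat, forall L M,
    (forall z, In z L -> fst z <w b) -> (forall z, In z M -> fst z <w b) ->
    e L = e M -> L = M.
Proof.
  destruct (closed_segment_code b) as [f Hf].
  exists (fun L => code_list (map (fun z => (f (fst z), snd z)) L)).
  intros L M HL HM H. apply code_list_inj in H.
  apply (map_inj_on _ _ _ (fun z => fst z <w b)) in H; auto.
  intros [y k] [y' k'] Hy Hy' Heq. simpl in *. injection Heq; intros Hk Hfy.
  apply Hf in Hfy; try (apply olt_asym; assumption). subst. reflexivity.
Qed.

(* Pressing down the bound of [L] below [a], then pigeonholing the countably
   many finite lists below that bound. *)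
Lemma stationary_constant_list (S : W -> Prop) (R : W -> list (W * nat) -> Prop) :
  stationary W S -> (forall a, S a -> is_limit W a) ->
  (forall a, S a -> exists L, R a L /\ forall z, In z L -> fst z <w a) ->
  exists L, stationary W (fun a => S a /\ R a L).
Proof.
  intros HS Hlim HR.
  destruct (pressing_down S (fun b a => exists L, R a L /\ forall z, In z L -> fst z <w b))
    as [b HSb]; auto.
  { intros a Sa. destruct (HR a Sa) as [L [HRL HL]].
    destruct (limit_list_bound a (map fst L) (Hlim a Sa)) as [b [Hba Hb]].
    { intros y Hy. apply in_map_iff in Hy. destruct Hy as [z [<- Hz]]. auto. }
    exists b. split; auto. exists L. split; auto.
    intros z Hz. apply Hb, in_map, Hz. }
  destruct (bounded_lists_code b) as [e He].
  destruct (stationary_nat_fiber _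
      (fun n a => exists L, R a L /\ (forall z, In z L -> fst z <w b) /\ e L = n) HSb)
    as [n HSn].
  { intros a [_ [L [HRL HL]]]. eauto. }
  destruct (stationary_nonempty _ HSn) as [a0 [_ [L0 [_ [HL0 He0]]]]].
  exists L0. revert HSn. apply stationary_mono.
  intros a [[Sa _] [L [HRL [HL HeL]]]]. split; auto.
  rewrite <- (He L L0); auto. congruence.
Qed.

End ClubFilter.

Section LadderConditions.

Variables (W : Omega1) (E : W -> Prop) (l : W -> nat -> W) (c : W -> nat -> nat).
Hypothesis Hl : ladder_system W l.

Definition trace_root (p : cond W) (a : W) (L : list (W * nat)) : Prop :=
  forall g k, In (g, k) L <-> p g = Some k /\ g <w a.

Definition trace_colors (p : cond W) (a : W) (L : list (W * nat)) : Prop :=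
  forall x k, In (x, k) L <-> exists g j m, p g = Some j /\ j <= m /\ a <w g /\
    l g m = x /\ x <w a /\ c g m = k.

Definition compatible (p q : cond W) : Prop :=
  (forall g k k', p g = Some k -> q g = Some k' -> k = k') /\
  (forall x y kx ky m n, p x = Some kx -> q y = Some ky -> kx <= m -> ky <= n ->
     l x m = l y n -> c x m = c y n).

Definition cond_union (s : list (cond W)) : cond W :=
  fun g => fold_right (fun p acc => match p g with Some k => Some k | None => acc end)
             None s.

Lemma ladder_below_list (g a : W) :
  is_limit W g -> a <w g ->
  exists M, forall m, l g m <w a -> In (l g m, c g m) M.
Proof.
  intros Hg Hag. destruct (Hl g Hg) as [_ [Hinc Hcof]].
  destruct (Hcof a Hag) as [n Hn].
  exists (map (fun m => (l g m, c g m)) (seq 0 n)).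
  intros m Hm. apply (in_map (fun m => (l g m, c g m))), in_seq.
  split; [lia|]. simpl. destruct (Nat.lt_ge_cases m n) as [|Hnm]; auto.
  exfalso. apply (olt_asym W _ _ Hn).
  destruct (Nat.eq_dec n m) as [<-|Hne]; auto.
  apply (olt_trans W _ (l g m)); auto. apply Hinc. lia.
Qed.

Lemma trace_root_exists (p : cond W) (a : W) :
  finite_dom W p -> exists L, trace_root p a L /\ forall z, In z L -> fst z <w a.
Proof.
  intros [s Hs].
  pose (pair_of := fun g => (g, match p g with Some k => k | None => 0 end)).
  destruct (finite_pred_list _ (fun z => p (fst z) = Some (snd z) /\ fst z <w a)
      (map pair_of s)) as [L HL].
  { intros [g k] [Hpg _]. simpl in *.
    replace k with (match p g with Some k => k | None => 0 end) by (rewrite Hpg; auto).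
    apply (in_map pair_of), Hs. congruence. }
  exists L. split; [intros g k; exact (HL (g, k))|].
  intros z Hz. apply HL, Hz.
Qed.

Lemma trace_colors_exists (p : cond W) (a : W) :
  in_PE W E l c p -> exists L, trace_colors p a L /\ forall z, In z L -> fst z <w a.
Proof.
  intros [[s Hs] [Hdom _]].
  assert (Hcover : exists M, forall g j m, In g s -> p g = Some j -> a <w g ->
             l g m <w a -> In (l g m, c g m) M).
  { clear Hs. induction s as [|g s [M HM]].
    - exists nil. intros ? ? ? [].
    - destruct (classic (exists j, p g = Some j /\ a <w g)) as [[j [Hj Hag]]|Hno].
      + destruct (ladder_below_list g a (proj2 (Hdom g j Hj)) Hag) as [Mg HMg].
        exists (Mg ++ M). intros g' j' m [<-|Hin] Hj' Hag' Hm; apply in_or_app; eauto.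
      + exists M. intros g' j' m [<-|Hin] Hj' Hag' Hm; eauto.
        exfalso. eauto. }
  destruct Hcover as [M HM].
  destruct (finite_pred_list _ (fun z => exists g j m, p g = Some j /\ j <= m /\
      a <w g /\ l g m = fst z /\ fst z <w a /\ c g m = snd z) M) as [L HL].
  { intros [x k] [g [j [m [Hj [_ [Hag [Hx [Hm Hk]]]]]]]]. simpl in *. subst x k.
    apply (HM g j); auto. apply Hs. congruence. }
  exists L. split; [intros x k; exact (HL (x, k))|].
  intros z Hz. apply HL in Hz. destruct Hz as [? [? [? [? [? [? [? [? ?]]]]]]]]. auto.
Qed.

Lemma in_PE_compatible_self (p : cond W) : in_PE W E l c p -> compatible p p.
Proof. intros [_ [_ Hcol]]. split; [congruence|exact Hcol]. Qed.

Lemma compatible_sym (p q : cond W) : compatible p q -> compatible q p.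
Proof.
  intros [Hagree Hcol]. split.
  - intros g k k' Hq Hp. symmetry. eauto.
  - intros x y kx ky m n Hx Hy Hm Hn Hxy. symmetry. eauto.
Qed.

Lemma cond_union_Some (s : list (cond W)) (g : W) (k : nat) :
  cond_union s g = Some k -> exists p, In p s /\ p g = Some k.
Proof.
  unfold cond_union. induction s as [|p s IH]; simpl; [discriminate|].
  destruct (p g) eqn:Hpg; intro H.
  - exists p. split; auto. congruence.
  - destruct (IH H) as [p' [? ?]]. exists p'. auto.
Qed.

Lemma cond_union_ext (s : list (cond W)) (p : cond W) :
  (forall p q, In p s -> In q s -> compatible p q) -> In p s -> ext W (cond_union s) p.
Proof.
  unfold cond_union. induction s as [|p0 s IH]; intros Hcomp Hin g k Hpg; [destruct Hin|].
  simpl. destruct (p0 g) as [k0|] eqn:Hp0.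
  - f_equal. destruct Hin as [<-|Hin]; [congruence|].
    apply (proj1 (Hcomp p0 p (or_introl eq_refl) (or_intror Hin)) g); auto.
  - destruct Hin as [<-|Hin]; [congruence|].
    apply IH; simpl in *; auto.
Qed.

Lemma finite_dom_cond_union (s : list (cond W)) :
  (forall p, In p s -> finite_dom W p) -> finite_dom W (cond_union s).
Proof.
  unfold cond_union. induction s as [|p s IH]; intros Hfin.
  - exists nil. simpl. tauto.
  - destruct IH as [D HD]; [simpl in Hfin; auto|].
    destruct (Hfin p (or_introl eq_refl)) as [Dp HDp].
    exists (Dp ++ D). intros g Hg. apply in_or_app. simpl in Hg.
    destruct (p g) eqn:Hpg; [left; apply HDp; congruence|right; auto].
Qed.

Lemma centered_of_compatible (F : cond W -> Prop) :
  (forall p, F p -> in_PE W E l c p) -> (forall p q, F p -> F q -> compatible p q) ->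
  centered W E l c F.
Proof.
  intros HPE Hcomp s Hs. exists (cond_union s).
  assert (Hcomp_s : forall p q, In p s -> In q s -> compatible p q) by auto.
  split; [split; [|split]|intros p Hp; apply cond_union_ext; auto].
  - apply finite_dom_cond_union. intros p Hp. apply HPE; auto.
  - intros g k Hg. destruct (cond_union_Some s g k Hg) as [p [Hp Hpg]].
    destruct (HPE p (Hs p Hp)) as [_ [Hdom _]]. eauto.
  - intros x y kx ky m n Hx Hy Hm Hn Hxy.
    destruct (cond_union_Some s x kx Hx) as [p [Hp Hpx]].
    destruct (cond_union_Some s y ky Hy) as [q [Hq Hqy]].
    apply (proj2 (Hcomp_s p q Hp Hq)) with kx ky; auto.
Qed.

(* Any coloring conflict between [p] and [q] at a point below [b] is witnessed
   either in the common root or in [trace_colors q b], which [p] reproduces. *)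
Lemma trace_compatible (p q : cond W) (a b : W) (L1 L2 : list (W * nat)) :
  a <w b -> in_PE W E l c p -> in_PE W E l c q -> ~ E b ->
  (forall g k, p g = Some k -> g <w b) ->
  trace_root p a L1 -> trace_root q b L1 ->
  trace_colors p a L2 -> trace_colors q b L2 ->
  compatible p q.
Proof.
  intros Hab [_ [Hpdom Hpcol]] [_ [Hqdom _]] HnEb Hpb Hrp Hrq Hcp Hcq.
  assert (Hroot : forall g k, q g = Some k -> g <w b -> p g = Some k).
  { intros g k Hqg Hgb. apply Hrp, Hrq. auto. }
  split.
  - intros g k k' Hpg Hqg. rewrite (Hroot g k' Hqg (Hpb g k Hpg)) in Hpg. congruence.
  - intros x y kx ky m n Hx Hy Hm Hn Hxy.
    destruct (olt_total W y b) as [Hyb|[->|Hby]].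
    + apply (Hpcol x y kx ky); auto.
    + exfalso. exact (HnEb (proj1 (Hqdom b ky Hy))).
    + assert (Hxm : l x m <w b).
      { destruct (Hpdom x kx Hx) as [_ Hxlim].
        apply (olt_trans W _ x); [apply (Hl x Hxlim)|eauto]. }
      assert (Hin : In (l y n, c y n) L2).
      { apply Hcq. exists y, ky, n. rewrite <- Hxy. repeat split; auto. }
      apply Hcp in Hin. destruct Hin as [g [j [m' [Hpg [Hjm [_ [Hgm [_ Hcg]]]]]]]].
      rewrite <- Hcg. apply (Hpcol x g kx j); auto. congruence.
Qed.

Lemma club_bounding_domains (S : W -> Prop) (ps : W -> cond W) :
  (forall a, S a -> finite_dom W (ps a)) ->
  club W (fun b => forall a, a <w b -> S a -> forall g k, ps a g = Some k -> g <w b).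
Proof.
  intros Hfin. apply club_closure_points.
  - intros a b b' Hb Hbb' Sa g k Hg. eapply olt_trans; [eapply Hb; eauto|auto].
  - intro a. destruct (classic (S a)) as [Sa|Sa].
    + destruct (Hfin a Sa) as [s Hs]. destruct (list_strict_bound W a s) as [b [_ Hb]].
      exists b. intros _ g k Hg. apply Hb, Hs. congruence.
    + exists a. intro; contradiction.
Qed.

End LadderConditions.

Theorem lemma3 (W : Omega1) (l : W -> nat -> W) (c : W -> nat -> nat)
  (E : W -> Prop) :
  ladder_system W l ->
  stationary W E -> stationary W (fun a => ~ E a) ->
  stat_pc W (fun a => ~ E a) E l c.
Proof.
  intros Hl _ _ S ps [HS HSnE] Hps.
  pose (S1 := fun a => S a /\ is_limit W a /\
          forall a', a' <w a -> S a' -> forall g k, ps a' g = Some k -> g <w a).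
  assert (HS1 : stationary W S1).
  { apply stationary_inter_club; auto. apply club_inter2; [apply club_limits|].
    apply club_bounding_domains. intros a Sa. apply Hps, Sa. }
  destruct (stationary_constant_list W S1 (fun a L => trace_root W (ps a) a L))
    as [L1 HS2]; auto.
  { intros a [_ [Ha _]]. exact Ha. }
  { intros a [Sa _]. apply trace_root_exists, Hps, Sa. }
  destruct (stationary_constant_list W _ (fun a L => trace_colors W l c (ps a) a L) HS2)
    as [L2 HS3].
  { intros a [[_ [Ha _]] _]. exact Ha. }
  { intros a [[Sa _] _]. apply (trace_colors_exists W E l c Hl), Hps, Sa. }
  exists (fun a => (S1 a /\ trace_root W (ps a) a L1) /\ trace_colors W l c (ps a) a L2).
  split; [split; auto; intros a [[[Sa _] _] _]; auto|].
  apply centered_of_compatible.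
  - intros q [a [[[[Sa _] _] _] ->]]. auto.
  - intros q q' [a [[[[Sa [_ Ha]] Ra] Ca] ->]] [b [[[[Sb [_ Hb]] Rb] Cb] ->]].
    destruct (olt_total W a b) as [Hab|[<-|Hba]].
    + apply (trace_compatible W E l c Hl _ _ a b L1 L2); eauto.
    + apply (in_PE_compatible_self W E), Hps, Sa.
    + apply compatible_sym, (trace_compatible W E l c Hl _ _ b a L1 L2); eauto.
Qed.
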